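(* For the single-choice constraint $\mathcal{F}=\{S\subseteq E:|S|\le1\}$ and every product distribution $D$ of the element weights, $$\lim_{M\to\infty}\textsf{EoR}(\mathcal{F},M^D)=\textsf{PbM}(\mathcal{F},D).$$
   Context: Setting: $E$ is a finite ground set; each $e\in E$ has a nonnegative weight $w_e\sim D_e$, independently, the $D_e$ having no point masses, $D=\times_e D_e$. Elements arrive one by one in a fixed order with their realized weights; an online algorithm (knowing the distribution, possibly randomized) decides immediately and irrevocably upon each arrival whether to accept, keeping the accepted set in $\mathcal{F}$. $f(\boldsymbol{w})=\max_{e}w_e$; $\boldsymbol{w}(\textsf{ALG}(\boldsymbol{w}))$ is the weight of the set selected by $\textsf{ALG}$. For a product distribution $P$, $\textsf{EoR}(\mathcal{F},P)=\sup_{\textsf{ALG}}\mathbf{E}_{\boldsymbol{w}\sim P}[\boldsymbol{w}(\textsf{ALG}(\boldsymbol{w}))/f(\boldsymbol{w})]$ and $\textsf{PbM}(\mathcal{F},P)=\sup_{\textsf{ALG}}\Pr_{\boldsymbol{w}\sim P}[\boldsymbol{w}(\textsf{ALG}(\boldsymbol{w}))=f(\boldsymbol{w})]$. For $M>0$, $M^D$ is the product distribution of $(M^{w_1},\dots,M^{w_{|E|}})$ where $\boldsymbol{w}\sim D$. *)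

From HB Require Import structures.
From mathcomp Require Import all_boot all_order all_algebra.
From mathcomp Require Import all_classical all_reals all_analysis.
Set Implicit Arguments. Unset Strict Implicit. Unset Printing Implicit Defensive.
Import Order.TTheory GRing.Theory Num.Theory.
Local Open Scope classical_set_scope.
Local Open Scope ring_scope.

Section Defs.
Context {R : realType} {d : measure_display} {Omega : measurableType d}.

(* Ground set E = 'I_n, elements arriving in the order 0, 1, ..., n-1.
   A weight vector is an n.-tuple of reals (product sigma-algebra). *)

Definition mutually_independent (P : probability Omega R) (n : nat)
    (X : 'I_n -> Omega -> R) : Prop :=
  forall B : 'I_n -> set R, (forall e, measurable (B e)) ->
    P (\bigcap_(e in [set: 'I_n]) (X e @^-1` B e)) =
    (\prod_(e < n) P (X e @^-1` B e))%E.

Definition no_point_masses (P : probability Omega R) (n : nat)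
    (X : 'I_n -> Omega -> R) : Prop :=
  forall (e : 'I_n) (x : R), P (X e @^-1` [set x]) = 0%E.

(* A (possibly randomized) online algorithm for the single-choice constraint
   {S | |S| <= 1}, in behavioural form: alg i w is the probability that the
   algorithm accepts element i upon its arrival, given that it has not
   accepted anything before; it may depend only on the weights w_0..w_i
   already revealed, and is a measurable function of the weight vector. *)
Definition online_single_choice_alg (n : nat) (alg : 'I_n -> n.-tuple R -> R)
    : Prop :=
  forall i : 'I_n,
    [/\ (forall w, 0 <= alg i w <= 1),
        (forall w w' : n.-tuple R,
            (forall j : 'I_n, (j <= i)%N -> tnth w j = tnth w' j) ->
            alg i w = alg i w')
      & measurable_fun setT (alg i)].

Definition sel_prob (n : nat) (alg : 'I_n -> n.-tuple R -> R)
    (w : n.-tuple R) (i : 'I_n) : R :=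
  alg i w * \prod_(j < n | (j < i)%N) (1 - alg j w).

(* f(w) = max_e w_e  (weights are nonnegative). *)
Definition fmax (n : nat) (w : n.-tuple R) : R :=
  \big[Num.max/0]_(e < n) tnth w e.

(* w(ALG(w))/f(w), averaged over the algorithm's internal randomness. *)
Definition ratio (n : nat) (alg : 'I_n -> n.-tuple R -> R) (w : n.-tuple R) : R :=
  (\sum_(i < n) sel_prob alg w i * tnth w i) / fmax w.

(* Pr[w(ALG(w)) = f(w)] over the algorithm's internal randomness
   (selecting nothing has weight 0). *)
Definition hit_prob (n : nat) (alg : 'I_n -> n.-tuple R -> R) (w : n.-tuple R) : R :=
  \sum_(i < n) sel_prob alg w i * (tnth w i == fmax w)%:R
  + (1 - \sum_(i < n) sel_prob alg w i) * (0 == fmax w)%:R.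

Definition weights (n : nat) (X : 'I_n -> Omega -> R) (om : Omega) : n.-tuple R :=
  [tuple X i om | i < n].

Definition EoR (P : probability Omega R) (n : nat) (X : 'I_n -> Omega -> R)
    : \bar R :=
  ereal_sup [set (\int[P]_om (ratio alg (weights X om))%:E)%E
            | alg in [set alg | online_single_choice_alg alg]].

Definition PbM (P : probability Omega R) (n : nat) (X : 'I_n -> Omega -> R)
    : \bar R :=
  ereal_sup [set (\int[P]_om (hit_prob alg (weights X om))%:E)%E
            | alg in [set alg | online_single_choice_alg alg]].

Definition powX (M : R) (n : nat) (X : 'I_n -> Omega -> R) : 'I_n -> Omega -> R :=
  fun e om => M `^ (X e om).

End Defs.

From Pilot Require Import Defs.
From HB Require Import structures.
From mathcomp Require Import all_boot all_order all_algebra.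
From mathcomp Require Import all_classical all_reals all_analysis.
From mathcomp Require Import measurable_realfun.
Import Order.TTheory GRing.Theory Num.Theory.
Import numFieldNormedType.Exports.
Local Open Scope classical_set_scope.
Local Open Scope ring_scope.
Set Implicit Arguments. Unset Strict Implicit. Unset Printing Implicit Defensive.

(* For M > 1, applying x |-> M^x coordinatewise is an increasing bijection,
   so online algorithms on the weights M^w and on w correspond to each other
   with the same selection probabilities s_i.  On M^w the expected ratio is
   sum_i s_i M^(w_i - max w): a maximal element contributes exactly s_i, any
   other one at most M^(w_i - max w).  Hence
     EoR(M^D) <= PbM(D) + E[sum_(w_i < max w) M^(w_i - max w)],
   and, as max w > 0 almost surely (no atom at 0), PbM(D) <= EoR(M^D).  The
   error term is at most n and vanishes pointwise as M -> oo, so it vanishes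
   in expectation by dominated convergence. *)

Section powR_at_infinity.
Context {R : realType}.

Lemma le0_ger_powR (x : R) :
  x <= 0 -> {in Num.pos &, {homo (fun a => a `^ x) : a b /~ a <= b}}.
Proof.
move=> x_le0 a b; rewrite !posrE => a_gt0 b_gt0 ab.
by rewrite /powR !gt_eqF // ler_expR ler_wnM2l // ler_ln ?posrE.
Qed.

Lemma powR_cvgy_lt0 (x : R) : x < 0 -> M `^ x @[M --> +oo] --> 0.
Proof.
move=> x_lt0; apply/cvgrPdist_le => e e_gt0; near=> M.
have M_gt0 : 0 < M by near: M; apply: nbhs_pinfty_gt; rewrite num_real.
have eM : e `^ x^-1 <= M by near: M; apply: nbhs_pinfty_ge; rewrite num_real.
rewrite sub0r normrN ger0_norm ?powR_ge0 //.
have <- : (e `^ x^-1) `^ x = e by rewrite -powRrM mulVf ?lt_eqF // powRr1 ?ltW.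
by apply: le0_ger_powR; rewrite ?ltW ?posrE ?powR_gt0.
Unshelve. all: end_near. Qed.

End powR_at_infinity.

Lemma measurable_natr_bool d (T : measurableType d) (R : realType) (b : T -> bool) :
  measurable_fun setT b -> measurable_fun setT (fun x => (b x)%:R : R).
Proof.
move=> mb; rewrite (_ : (fun x => _) = fun x => if b x then 1 else 0).
  exact: measurable_fun_ifT.
by apply/funext => x; case: (b x).
Qed.

Section single_choice.
Context {R : realType} {n : nat}.
Implicit Types (alg : 'I_n -> n.-tuple R -> R) (w : n.-tuple R) (M : R).

Lemma le_fmax w i : tnth w i <= fmax w.
Proof. exact: le_bigmax. Qed.

Lemma fmax_gt0 w i : 0 < tnth w i -> 0 < fmax w.
Proof. by move=> /lt_le_trans; apply; exact: le_fmax. Qed.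

Lemma fmax_map_powR M w : (0 < n)%N -> 1 <= M -> (forall i, 0 <= tnth w i) ->
  fmax (map_tuple (powR M) w) = M `^ fmax w.
Proof.
move=> n_gt0 M_ge1 w_ge0.
have [i0 _ fmaxE] := @eq_bigmax _ _ _ 0 (Ordinal n_gt0) xpredT (tnth w) erefl
  (fun i _ => w_ge0 i).
apply/le_anti/andP; split.
  apply: bigmax_le => [|i _]; first exact: powR_ge0.
  by rewrite tnth_map ler_powR // le_fmax.
by rewrite /fmax fmaxE -tnth_map le_fmax.
Qed.

Lemma online_alg01 alg i w : online_single_choice_alg alg -> 0 <= alg i w <= 1.
Proof. by move=> /(_ i) [+ _ _]; apply. Qed.

Lemma online_alg_map (h : R -> R) alg :
  measurable_fun setT h -> online_single_choice_alg alg ->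
  online_single_choice_alg (fun i w => alg i (map_tuple h w)).
Proof.
move=> mh oa i; have [alg01 alg_online malg] := oa i; split => //.
- by move=> w w' ww'; apply: alg_online => j ji; rewrite !tnth_map ww'.
- apply: measurableT_comp malg _; apply/measurable_fun_tnthP => j.
  rewrite (_ : _ \o _ = h \o (fun w => tnth w j)); last first.
    by apply/funext => w /=; rewrite tnth_map.
  exact: measurableT_comp (measurable_tnth j).
Qed.

Lemma sum_sel_probE alg w :
  \sum_i sel_prob alg w i = 1 - \prod_(j < n) (1 - alg j w).
Proof.
pose S k := \prod_(j < n | (j < k)%N) (1 - alg j w).
have SS (i : 'I_n) : S i.+1 = (1 - alg i w) * S i.
  rewrite /S (bigD1 i) ?ltnSn //=; congr (_ * _); apply: eq_bigl => j.
  by rewrite ltnS [RHS]ltn_neqAle andbC.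
have selE (i : 'I_n) : sel_prob alg w i = - (S i.+1 - S i).
  by rewrite SS mulrBl mul1r !opprB addrCA subrr addr0.
under eq_bigr do rewrite selE.
rewrite sumrN -(big_mkord xpredT (fun i => S i.+1 - S i)) telescope_sumr //.
by rewrite opprB /S big_pred0 // (eq_bigl xpredT) // => j; rewrite ltn_ord.
Qed.

Lemma sel_prob_ge0 alg w i : online_single_choice_alg alg -> 0 <= sel_prob alg w i.
Proof.
move=> oa; apply: mulr_ge0; first by have /andP[] := online_alg01 i w oa.
by apply: prodr_ge0 => j _; rewrite subr_ge0; have /andP[] := online_alg01 j w oa.
Qed.

Lemma sum_sel_prob_le1 alg w : online_single_choice_alg alg ->
  \sum_i sel_prob alg w i <= 1.
Proof.
move=> oa; rewrite sum_sel_probE gerBl.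
by apply: prodr_ge0 => j _; rewrite subr_ge0; have /andP[] := online_alg01 j w oa.
Qed.

Lemma sel_prob_le1 alg w i : online_single_choice_alg alg -> sel_prob alg w i <= 1.
Proof.
move=> oa; apply: le_trans (sum_sel_prob_le1 w oa).
rewrite (bigD1 i) //= lerDl; apply: sumr_ge0 => j _; exact: sel_prob_ge0.
Qed.

Lemma hit_prob_ge0 alg w : online_single_choice_alg alg -> 0 <= hit_prob alg w.
Proof.
move=> oa; apply: addr_ge0.
  by apply: sumr_ge0 => i _; rewrite mulr_ge0 ?sel_prob_ge0.
by rewrite mulr_ge0 // subr_ge0 sum_sel_prob_le1.
Qed.

Lemma hit_prob_le1 alg w : online_single_choice_alg alg -> hit_prob alg w <= 1.
Proof.
move=> oa; rewrite -[leRHS](subrK (\sum_i sel_prob alg w i)) addrC.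
apply: lerD; first by apply: ler_sum => i _; rewrite ler_piMr ?sel_prob_ge0 ?lern1 ?leq_b1.
by rewrite ler_piMr ?subr_ge0 ?sum_sel_prob_le1 ?lern1 ?leq_b1.
Qed.

Definition pow_ratio alg M w : R :=
  \sum_i sel_prob alg w i * M `^ (tnth w i - fmax w).

Definition submax_mass M w : R :=
  \sum_(i | tnth w i != fmax w) M `^ (tnth w i - fmax w).

Lemma pow_ratio_ge0 alg M w : online_single_choice_alg alg -> 0 <= pow_ratio alg M w.
Proof. by move=> oa; apply: sumr_ge0 => i _; rewrite mulr_ge0 ?sel_prob_ge0 ?powR_ge0. Qed.

Lemma ratio_map_powR alg' alg M w :
  (0 < n)%N -> 1 <= M -> (forall i, 0 <= tnth w i) ->
  (forall j, alg' j (map_tuple (powR M) w) = alg j w) ->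
  Defs.ratio alg' (map_tuple (powR M) w) = pow_ratio alg M w.
Proof.
move=> n_gt0 M_ge1 w_ge0 alg'E.
have M_neq0 : M != 0 by rewrite gt_eqF // (lt_le_trans ltr01).
rewrite /Defs.ratio fmax_map_powR // mulr_suml; apply: eq_bigr => i _.
rewrite tnth_map powRB ?M_neq0 ?implybT // -mulrA; congr (_ * _).
by rewrite /sel_prob alg'E; congr (_ * _); apply: eq_bigr => j _; rewrite alg'E.
Qed.

Lemma hit_prob_le_pow_ratio alg M w : online_single_choice_alg alg ->
  0 < fmax w -> hit_prob alg w <= pow_ratio alg M w.
Proof.
move=> oa max_gt0; rewrite /hit_prob (_ : (0 == fmax w) = false) ?mulr0 ?addr0.
  apply: ler_sum => i _; rewrite ler_wpM2l ?sel_prob_ge0 //.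
  by case: eqP => [->|_]; rewrite ?subrr ?powRr0 ?powR_ge0.
by rewrite eq_sym gt_eqF.
Qed.

Lemma pow_ratio_le alg M w : online_single_choice_alg alg ->
  pow_ratio alg M w <= hit_prob alg w + submax_mass M w.
Proof.
move=> oa; apply: (@le_trans _ _
  (\sum_i sel_prob alg w i * (tnth w i == fmax w)%:R + submax_mass M w)).
  rewrite /submax_mass (big_mkcond (fun i => tnth w i != fmax w)) -big_split /=.
  apply: ler_sum => i _.
  case: eqP => [->|_] /=; first by rewrite subrr powRr0 addr0.
  by rewrite mulr0 add0r ler_piMl ?powR_ge0 ?sel_prob_le1.
by rewrite lerD2r /hit_prob lerDl mulr_ge0 // subr_ge0 sum_sel_prob_le1.
Qed.

Lemma submax_mass_ge0 M w : 0 <= submax_mass M w.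
Proof. by apply: sumr_ge0 => i _; exact: powR_ge0. Qed.

Lemma submax_mass_le M w : 1 <= M -> submax_mass M w <= n%:R.
Proof.
move=> M_ge1; rewrite /submax_mass big_mkcond.
apply: (@le_trans _ _ (\sum_(i < n) 1)); last by rewrite sumr_const card_ord.
apply: ler_sum => i _; case: ifP => // _.
by rewrite -[leRHS](powRr0 M) ler_powR // subr_le0 le_fmax.
Qed.

Lemma submax_mass_cvg0 w : submax_mass M w @[M --> +oo] --> 0.
Proof.
suff : submax_mass M w @[M --> +oo] --> \sum_(i | tnth w i != fmax w) (0 : R).
  by rewrite big1.
apply: (cvg_big (op := +%R) add_continuous) => // i wi_neq.
by apply: powR_cvgy_lt0; rewrite subr_lt0 lt_neqAle wi_neq le_fmax.
Qed.

Lemma measurable_fmax : measurable_fun setT (@fmax R n).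
Proof.
rewrite /fmax; elim: (index_enum _) => [|i s IHs].
  by under eq_fun do rewrite big_nil; exact: measurable_cst.
under eq_fun do rewrite big_cons.
by apply: measurable_maxr => //; exact: measurable_tnth.
Qed.

Lemma measurable_sel_prob alg i : online_single_choice_alg alg ->
  measurable_fun setT (sel_prob alg ^~ i).
Proof.
move=> oa; have malg j : measurable_fun setT (alg j) by have [] := oa j.
apply: measurable_funM => //; under eq_fun do rewrite big_mkcond /=.
apply: measurable_prod => j _; case: (j < i)%N; last exact: measurable_cst.
exact: measurable_funB.
Qed.

Lemma measurable_hit_prob alg : online_single_choice_alg alg ->
  measurable_fun setT (hit_prob alg).
Proof.
move=> oa; have msel i := measurable_sel_prob i oa.
apply: measurable_funD; first apply: measurable_sum => i.
  apply: measurable_funM => //; apply: measurable_natr_bool.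
  by apply: measurable_fun_eqr; [exact: measurable_tnth|exact: measurable_fmax].
apply: measurable_funM; first exact: measurable_funB (measurable_sum _ _).
by apply: measurable_natr_bool; apply: measurable_fun_eqr measurable_fmax.
Qed.

Lemma measurable_powR_gap M i :
  measurable_fun setT (fun w => M `^ (tnth w i - fmax w)).
Proof.
apply: measurableT_comp (measurable_powRr M) _.
by apply: measurable_funB; [exact: measurable_tnth|exact: measurable_fmax].
Qed.

Lemma measurable_pow_ratio alg M : online_single_choice_alg alg ->
  measurable_fun setT (pow_ratio alg M).
Proof.
move=> oa; apply: measurable_sum => i.
exact: measurable_funM (measurable_sel_prob _ oa) (measurable_powR_gap M i).
Qed.

Lemma measurable_submax_mass M : measurable_fun setT (submax_mass M).
Proof.
rewrite /submax_mass; under eq_fun do rewrite big_mkcond.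
apply: measurable_sum => i; apply: measurable_fun_ifT.
- apply: measurable_neg; apply: measurable_fun_eqr measurable_fmax.
  exact: measurable_tnth.
- exact: measurable_powR_gap.
- exact: measurable_cst.
Qed.

End single_choice.

Section power_limit.
Context {R : realType} {d : measure_display} {Omega : measurableType d}.
Variables (P : probability Omega R) (n : nat) (X : 'I_n -> Omega -> R).
Hypothesis mX : forall e, measurable_fun setT (X e).
Hypothesis X_ge0 : forall e om, 0 <= X e om.

Local Notation W := (weights X).

Lemma weights_ge0 om i : 0 <= tnth (W om) i.
Proof. by rewrite tnth_mktuple. Qed.

Lemma weights_powX M om : weights (powX M X) om = map_tuple (powR M) (W om).
Proof. by apply: eq_from_tnth => i; rewrite tnth_mktuple tnth_map tnth_mktuple. Qed.

Lemma measurable_EFin_weights (f : n.-tuple R -> R) :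
  measurable_fun setT f -> measurable_fun setT (fun om => (f (W om))%:E).
Proof.
move=> mf; apply/measurable_EFinP; apply: measurableT_comp mf _.
apply/measurable_fun_tnthP => i; rewrite (_ : _ \o _ = X i) //.
by apply/funext => om /=; rewrite tnth_mktuple.
Qed.

Local Open Scope ereal_scope.

Lemma PbM_ge0 : 0 <= PbM P X.
Proof.
pose alg0 (_ : 'I_n) (_ : n.-tuple R) : R := 0%R.
have oa0 : online_single_choice_alg alg0.
  by move=> i; split => //; [move=> w; rewrite lexx ler01|exact: measurable_cst].
apply: le_ereal_sup_tmp; exists (\int[P]_om (hit_prob alg0 (W om))%:E).
  by exists alg0.
by apply: integral_ge0 => om _; rewrite lee_fin hit_prob_ge0.
Qed.

Lemma PbM_le1 : PbM P X <= 1.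
Proof.
apply: ge_ereal_sup => _ [alg oa <-].
apply: (@le_trans _ _ (\int[P]_om (cst 1 om))).
  apply: ge0_le_integral => //.
  - by move=> om _; rewrite lee_fin hit_prob_ge0.
  - exact: measurable_EFin_weights (measurable_hit_prob oa).
  - by move=> om _; rewrite lee_fin hit_prob_le1.
by rewrite integral_cst // mul1e probability_le1.
Qed.

Lemma EoR_powX_le M : (0 < n)%N -> (1 < M)%R ->
  EoR P (powX M X) <= PbM P X + \int[P]_om (submax_mass M (W om))%:E.
Proof.
move=> n_gt0 M_gt1; apply: ge_ereal_sup => _ [alg oa <-].
pose alg_w i w := alg i (map_tuple (powR M) w).
have oa_w : online_single_choice_alg alg_w.
  exact: online_alg_map (measurable_powRr M) oa.
rewrite (eq_integral (fun om => (pow_ratio alg_w M (W om))%:E)); last first.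
  move=> om _; rewrite weights_powX.
  by rewrite (ratio_map_powR (alg := alg_w) n_gt0 (ltW M_gt1) (weights_ge0 om) (fun=> erefl)).
apply: (@le_trans _ _ (\int[P]_om
    ((hit_prob alg_w (W om))%:E + (submax_mass M (W om))%:E))).
  apply: ge0_le_integral => //.
  - by move=> om _; rewrite lee_fin pow_ratio_ge0.
  - exact: measurable_EFin_weights (measurable_pow_ratio M oa_w).
  - by apply: emeasurable_funD; apply: measurable_EFin_weights;
      [exact: measurable_hit_prob|exact: measurable_submax_mass].
  - by move=> om _; rewrite -EFinD lee_fin pow_ratio_le.
rewrite ge0_integralD //.
- by apply: leeD2r; apply: ereal_sup_ubound; exists alg_w.
- by move=> om _; rewrite lee_fin hit_prob_ge0.
- exact: measurable_EFin_weights (measurable_hit_prob oa_w).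
- by move=> om _; rewrite lee_fin submax_mass_ge0.
- exact: measurable_EFin_weights (measurable_submax_mass M).
Qed.

Lemma PbM_le_EoR_powX M : (0 < n)%N -> no_point_masses P X -> (1 < M)%R ->
  PbM P X <= EoR P (powX M X).
Proof.
move=> n_gt0 X_atomless M_gt1; apply: ge_ereal_sup => _ [alg oa <-].
pose alg_ln i v := alg i (map_tuple (fun x => ln x / ln M)%R v).
have oa_ln : online_single_choice_alg alg_ln.
  apply: online_alg_map oa; apply: measurable_funM => //; exact: measurable_ln.
have alg_lnE w j : alg_ln j (map_tuple (powR M) w) = alg j w.
  congr (alg j); apply: eq_from_tnth => i.
  by rewrite !tnth_map ln_powR mulfK // gt_eqF // ln_gt0.
apply: (@le_trans _ _ (\int[P]_om (pow_ratio alg M (W om))%:E)).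
  apply: ae_ge0_le_integral => //.
  - by move=> om _; rewrite lee_fin hit_prob_ge0.
  - exact: measurable_EFin_weights (measurable_hit_prob oa).
  - by move=> om _; rewrite lee_fin pow_ratio_ge0.
  - exact: measurable_EFin_weights (measurable_pow_ratio M oa).
  pose i0 := Ordinal n_gt0.
  exists (X i0 @^-1` [set 0%R]); split.
  - by rewrite -[A in measurable A]setTI; exact: mX.
  - exact: X_atomless.
  - move=> om /= not_le; apply: contra_notP not_le => /eqP X_neq0 _.
    rewrite lee_fin hit_prob_le_pow_ratio // (@fmax_gt0 _ _ _ i0) //.
    by rewrite tnth_mktuple lt_neqAle eq_sym X_neq0 X_ge0.
rewrite (eq_integral (fun om => (Defs.ratio alg_ln (weights (powX M X) om))%:E)).
  by apply: ereal_sup_ubound; exists alg_ln.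
move=> om _; rewrite weights_powX.
by rewrite (ratio_map_powR n_gt0 (ltW M_gt1) (weights_ge0 om) (alg_lnE _)).
Qed.

Lemma integral_submax_mass_cvg0 :
  \int[P]_om (submax_mass M (W om))%:E @[M --> +oo%R] --> 0.
Proof.
apply/cvge_pinftyP => u u_oo.
have [N _ u_ge1] : \forall k \near \oo, (1 <= u k)%R by move/cvgryPge : u_oo; apply.
rewrite -(cvg_shiftn N) /=.
have := @dominated_cvg _ _ _ P _ measurableT
  (fun k om => (submax_mass (u (k + N)%N) (W om))%:E) (cst 0) (cst n%:R%:E).
rewrite integral0; apply.
- by move=> k; exact: measurable_EFin_weights (measurable_submax_mass _).
- move=> om _; apply: cvg_EFin; first exact: nearW.
  apply: cvg_comp (submax_mass_cvg0 (W om)).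
  by rewrite (cvg_shiftn N (fun k => u k)).
- by [].
- exact: finite_measure_integrable_cst.
- move=> k om _; rewrite lee_fin ger0_norm ?submax_mass_ge0 //.
  by rewrite submax_mass_le // u_ge1 //= leq_addl.
Qed.

End power_limit.

Theorem proposition4 (R : realType) (d : measure_display) (Omega : measurableType d)
    (P : probability Omega R) (n : nat) (X : 'I_n -> Omega -> R) :
  (0 < n)%N ->
  (forall e, measurable_fun setT (X e)) ->
  (forall e om, 0 <= X e om) ->
  mutually_independent P X ->
  no_point_masses P X ->
  EoR P (powX M X) @[M --> +oo%R] --> PbM P X.
Proof.
move=> n_gt0 mX X_ge0 _ X_atomless.
have PbM_fin : PbM P X \is a fin_num.
  by rewrite ge0_fin_numE ?PbM_ge0 // (le_lt_trans (PbM_le1 P mX)) ?ltry.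
apply: (@squeeze_cvge _ _ _ _ (cst (PbM P X)) _
  (fun M => PbM P X + \int[P]_om (submax_mass M (weights X om))%:E)%E).
- near=> M; have M_gt1 : 1 < M by near: M; apply: nbhs_pinfty_gt; rewrite num_real.
  by rewrite (PbM_le_EoR_powX mX X_ge0) ?(EoR_powX_le P mX X_ge0).
- exact: cvg_cst.
- rewrite -[Y in _ --> Y]adde0; apply: cvgeD; first exact: fin_num_adde_defl.
    exact: cvg_cst.
  exact: (integral_submax_mass_cvg0 P mX).
Unshelve. all: end_near.
Qed.
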